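(* If $G\subset\mathbb{R}^2$ is (the open domain bounded by) a rhombus with smallest angle $\alpha\in(0,\pi/2]$, then \[ P(G)=\frac{1}{\sin\frac{\alpha}{2}}. \]
   Context: For four distinct points $a,b,c,d\in\mathbb{R}^2$ set $p(a,b,c,d)=\frac{|a-b||c-d|+|a-d||b-c|}{|a-c||b-d|}$. For a domain $D$ whose boundary is a Jordan curve, $P(D)=\sup p(a,b,c,d)$ over all distinct $a,b,c,d\in\partial D$ occurring in this order when $\partial D$ is traversed in the positive direction. *)

From Stdlib Require Import Reals.
Open Scope R_scope.

Definition pt : Type := (R * R)%type.

Definition padd (p q : pt) : pt := (fst p + fst q, snd p + snd q).

Definition dist2 (p q : pt) : R :=
  sqrt ((fst p - fst q) ^ 2 + (snd p - snd q) ^ 2).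

Definition vnorm (u : pt) : R := sqrt (fst u ^ 2 + snd u ^ 2).
Definition vdot (u v : pt) : R := fst u * fst v + snd u * snd v.
Definition vdet (u v : pt) : R := fst u * snd v - snd u * fst v.

Definition pq (a b c d : pt) : R :=
  (dist2 a b * dist2 c d + dist2 a d * dist2 b c) / (dist2 a c * dist2 b d).

Definition lerp (p q : pt) (t : R) : pt :=
  (fst p + t * (fst q - fst p), snd p + t * (snd q - snd p)).

Definition quad_path (v0 v1 v2 v3 : pt) (t : R) : pt :=
  if Rlt_dec t 1 then lerp v0 v1 t
  else if Rlt_dec t 2 then lerp v1 v2 (t - 1)
  else if Rlt_dec t 3 then lerp v2 v3 (t - 2)
  else lerp v3 v0 (t - 3).

(* Boundary of the rhombus with vertices a, a+e1, a+e1+e2, a+e2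
   (with |e1| = |e2|, vdet e1 e2 > 0 this order is counterclockwise,
   i.e. the positive direction). *)
Definition rhombus_path (a e1 e2 : pt) (t : R) : pt :=
  quad_path a (padd a e1) (padd (padd a e1) e2) (padd a e2) t.

(* a,b,c,d are distinct points of the curve gamma (on [0,4)) occurring in this
   order along the positive traversal (up to the choice of starting point,
   which is handled by allowing any increasing parameters in [0,4)). *)
Definition in_order_on (gamma : R -> pt) (a b c d : pt) : Prop :=
  a <> b /\ a <> c /\ a <> d /\ b <> c /\ b <> d /\ c <> d /\
  exists t1 t2 t3 t4 : R,
    0 <= t1 /\ t1 < t2 /\ t2 < t3 /\ t3 < t4 /\ t4 < 4 /\
    gamma t1 = a /\ gamma t2 = b /\ gamma t3 = c /\ gamma t4 = d.

Definition p_values (gamma : R -> pt) (x : R) : Prop :=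
  exists a b c d : pt, in_order_on gamma a b c d /\ x = pq a b c d.

(* For a quadrilateral a, b, c, d in convex position with angles A, B, C, D, Bretschneider's
   relation |ac|^2 |bd|^2 = P^2 + Q^2 - 2 P Q cos (A + C), where P = |ab| |cd| and
   Q = |ad| |bc|, yields p(a, b, c, d) <= 1 / sin (alpha / 2) as soon as cos (A + C) <= cos alpha.
   Seen from a point of the boundary of the rhombus, the arc between two other boundary points
   subtends the angle PI if it contains no corner, at least alpha if it contains one and at
   least alpha / 2 if it contains two. The arcs seen from b and from d (or from a and from c)
   share the four corners, so A + C >= alpha and B + D >= alpha, and since A + B + C + D is a
   multiple of 2 PI this forces cos (A + C) <= cos alpha. Conversely, the bound is approached by
   two points close to an acute corner on either side of it, the corner itself and the opposite
   corner. *)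

From Stdlib Require Import Reals Lra Lia Psatz ZArith.
Open Scope R_scope.

Definition vsub (p q : pt) : pt := (fst p - fst q, snd p - snd q).
Definition vopp (u : pt) : pt := (- fst u, - snd u).
Definition vangle (u v : pt) : R := acos (vdot u v / (vnorm u * vnorm v)).

Lemma vnorm_mul_self u : vnorm u * vnorm u = fst u ^ 2 + snd u ^ 2.
Proof. unfold vnorm. apply sqrt_sqrt. nra. Qed.

Lemma vnorm_ge0 u : 0 <= vnorm u.
Proof. apply sqrt_pos. Qed.

Lemma vnorm_vopp u : vnorm (vopp u) = vnorm u.
Proof. unfold vnorm, vopp; cbn [fst snd]. f_equal. ring. Qed.

Lemma vnorm_vsub_sym p q : vnorm (vsub p q) = vnorm (vsub q p).
Proof. unfold vnorm, vsub; cbn [fst snd]. f_equal. ring. Qed.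

Lemma dist2_vnorm p q : dist2 p q = vnorm (vsub q p).
Proof. unfold dist2, vnorm, vsub; cbn [fst snd]. f_equal. ring. Qed.

Lemma dist2_sym p q : dist2 p q = dist2 q p.
Proof. unfold dist2. f_equal. ring. Qed.

Lemma vnorm_vsub_pos p q : p <> q -> 0 < vnorm (vsub q p).
Proof.
  intros Hpq. unfold vnorm, vsub; cbn [fst snd]. apply sqrt_lt_R0.
  destruct p as [p1 p2], q as [q1 q2]; cbn [fst snd].
  destruct (Req_dec q1 p1); destruct (Req_dec q2 p2); subst;
    [now exfalso; apply Hpq | ..];
    match goal with
    | H : ?x <> ?y |- _ => assert (0 < (x - y) ^ 2) by (assert (x - y <> 0) by lra; nra)
    end; nra.
Qed.

Lemma neq_of_vnorm_vsub_pos p q : 0 < vnorm (vsub q p) -> p <> q.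
Proof.
  intros H ->. unfold vnorm, vsub in H; cbn [fst snd] in H.
  replace ((fst q - fst q) ^ 2 + (snd q - snd q) ^ 2) with 0 in H by ring.
  rewrite sqrt_0 in H. lra.
Qed.

Lemma lagrange_identity u v :
  vdot u v ^ 2 + vdet u v ^ 2 = (fst u ^ 2 + snd u ^ 2) * (fst v ^ 2 + snd v ^ 2).
Proof. unfold vdot, vdet. ring. Qed.

Lemma vnorm_pos_of_vdet_pos u v : 0 < vdet u v -> 0 < vnorm u /\ 0 < vnorm v.
Proof.
  intros H. pose proof (lagrange_identity u v). pose proof (vnorm_mul_self u).
  pose proof (vnorm_mul_self v). pose proof (vnorm_ge0 u). pose proof (vnorm_ge0 v).
  split; [destruct (Req_dec (vnorm u) 0) as [E|E] | destruct (Req_dec (vnorm v) 0) as [E|E]];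
    try lra; exfalso; rewrite E in *; nra.
Qed.

Lemma vdot_div_bound u v : 0 < vnorm u -> 0 < vnorm v ->
  -1 <= vdot u v / (vnorm u * vnorm v) <= 1.
Proof.
  intros Hu Hv.
  pose proof (vnorm_mul_self u). pose proof (vnorm_mul_self v).
  pose proof (lagrange_identity u v).
  assert (Hp : 0 < vnorm u * vnorm v) by nra.
  assert (vdot u v ^ 2 <= (vnorm u * vnorm v) ^ 2) by nra.
  split; apply (Rmult_le_reg_r (vnorm u * vnorm v)); auto;
    unfold Rdiv; rewrite Rmult_assoc, Rinv_l by lra; nra.
Qed.

Lemma vangle_bound u v : 0 <= vangle u v <= PI.
Proof. apply acos_bound. Qed.

Lemma vangle_sym u v : vangle u v = vangle v u.
Proof. unfold vangle, vdot. do 2 f_equal; ring. Qed.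

Lemma cos_vangle u v : 0 < vnorm u -> 0 < vnorm v ->
  cos (vangle u v) = vdot u v / (vnorm u * vnorm v).
Proof. intros. apply cos_acos. now apply vdot_div_bound. Qed.

Lemma sin_vangle u v : 0 < vnorm u -> 0 < vnorm v -> 0 <= vdet u v ->
  sin (vangle u v) = vdet u v / (vnorm u * vnorm v).
Proof.
  intros Hu Hv Hd. unfold vangle. rewrite sin_acos by now apply vdot_div_bound.
  pose proof (vnorm_mul_self u). pose proof (vnorm_mul_self v).
  pose proof (lagrange_identity u v).
  assert (Hp : 0 < vnorm u * vnorm v) by nra.
  assert (0 <= vdet u v / (vnorm u * vnorm v))
    by (apply Rmult_le_pos; [lra | left; apply Rinv_0_lt_compat; lra]).
  rewrite <- (sqrt_Rsqr (vdet u v / (vnorm u * vnorm v))) by assumption.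
  f_equal. unfold Rsqr.
  apply (Rmult_eq_reg_r ((vnorm u * vnorm v) * (vnorm u * vnorm v))); [|nra].
  field_simplify; [|lra|lra].
  replace (vnorm u ^ 2) with (fst u ^ 2 + snd u ^ 2) by (rewrite <- H; ring).
  replace (vnorm v ^ 2) with (fst v ^ 2 + snd v ^ 2) by (rewrite <- H0; ring).
  nra.
Qed.

Lemma cos_vangle_add u v w z :
  0 < vnorm u -> 0 < vnorm v -> 0 < vnorm w -> 0 < vnorm z ->
  0 <= vdet u v -> 0 <= vdet w z ->
  cos (vangle u v + vangle w z) * (vnorm u * vnorm v * (vnorm w * vnorm z)) =
  vdot u v * vdot w z - vdet u v * vdet w z.
Proof.
  intros. rewrite cos_plus, !cos_vangle, !sin_vangle by assumption.
  field. repeat split; lra.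
Qed.

Lemma sin_vangle_add u v w z :
  0 < vnorm u -> 0 < vnorm v -> 0 < vnorm w -> 0 < vnorm z ->
  0 <= vdet u v -> 0 <= vdet w z ->
  sin (vangle u v + vangle w z) * (vnorm u * vnorm v * (vnorm w * vnorm z)) =
  vdet u v * vdot w z + vdot u v * vdet w z.
Proof.
  intros. rewrite sin_plus, !cos_vangle, !sin_vangle by assumption.
  field. repeat split; lra.
Qed.

Lemma vdot_of_vangle_PI u v : 0 < vnorm u -> 0 < vnorm v -> vangle u v = PI ->
  vdot u v = - (vnorm u * vnorm v).
Proof.
  intros Hu Hv E. pose proof (cos_vangle u v Hu Hv) as C. rewrite E, cos_PI in C.
  apply (Rmult_eq_compat_r (vnorm u * vnorm v)) in C.
  unfold Rdiv in C. rewrite Rmult_assoc, Rinv_l in C by nra. lra.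
Qed.

Lemma antiparallel_of_vdot u v : vdot u v = - (vnorm u * vnorm v) ->
  vnorm v * fst u = - (vnorm u * fst v) /\ vnorm v * snd u = - (vnorm u * snd v).
Proof.
  intros E. pose proof (vnorm_mul_self u). pose proof (vnorm_mul_self v).
  unfold vdot in E.
  set (x := vnorm v * fst u + vnorm u * fst v).
  set (y := vnorm v * snd u + vnorm u * snd v).
  assert (x * x + y * y = 0).
  { replace (x * x + y * y) with
      ((vnorm v * vnorm v) * (fst u ^ 2 + snd u ^ 2) + (vnorm u * vnorm u) * (fst v ^ 2 + snd v ^ 2)
       + 2 * (vnorm u * vnorm v) * (fst u * fst v + snd u * snd v)) by (unfold x, y; ring).
    rewrite E, <- H, <- H0. ring. }
  assert (x = 0) by nra. assert (y = 0) by nra. unfold x, y in *. lra.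
Qed.

Lemma acos_antitone x y : -1 <= x -> x <= y -> y <= 1 -> acos y <= acos x.
Proof.
  intros. destruct (Rle_dec (acos y) (acos x)) as [|N]; auto. exfalso.
  pose proof (acos_bound x). pose proof (acos_bound y).
  pose proof (cos_decreasing_1 (acos x) (acos y)) as D.
  rewrite !cos_acos in D by lra. lra.
Qed.

Lemma cos_antitone x y : 0 <= x -> x <= y -> y <= PI -> cos y <= cos x.
Proof.
  intros. destruct (Req_dec x y) as [->|]; [lra|].
  left. apply cos_decreasing_1; lra.
Qed.

Lemma le_of_cos_le x y : 0 <= x <= PI -> 0 <= y <= PI -> cos y <= cos x -> x <= y.
Proof.
  intros. destruct (Rle_dec x y); auto. exfalso.
  pose proof (cos_decreasing_1 y x). lra.
Qed.

Lemma cos_le_of_sin_ge c1 s1 c2 s2 : c1 * c1 + s1 * s1 = 1 -> c2 * c2 + s2 * s2 = 1 ->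
  0 <= s1 -> 0 < s2 -> c1 * s2 <= s1 * c2 -> c1 <= c2.
Proof.
  intros E1 E2 H1 H2 H. destruct (Rle_dec c1 c2) as [|N]; auto. exfalso.
  destruct (Rle_dec 0 c2).
  - assert (c2 * (s1 - s2) > 0) by nra. assert (s1 > s2) by nra. nra.
  - assert (c1 <= 0) by nra. assert (s2 < s1) by nra. nra.
Qed.

(* Angles in [0, PI] with nonnegative sines are compared through cot = vdot / vdet. *)
Lemma vangle_le_of_cross u v p q :
  0 < vnorm u -> 0 < vnorm v -> 0 < vnorm p -> 0 < vnorm q ->
  0 <= vdet u v -> 0 < vdet p q -> vdot u v * vdet p q <= vdet u v * vdot p q ->
  vangle p q <= vangle u v.
Proof.
  intros Hu Hv Hp Hq Duv Dpq H.
  pose proof (vdot_div_bound u v Hu Hv). pose proof (vdot_div_bound p q Hp Hq).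
  apply acos_antitone; try lra.
  pose proof (vnorm_mul_self u). pose proof (vnorm_mul_self v).
  pose proof (vnorm_mul_self p). pose proof (vnorm_mul_self q).
  pose proof (lagrange_identity u v). pose proof (lagrange_identity p q).
  set (Nu := vnorm u * vnorm v). set (Np := vnorm p * vnorm q).
  assert (0 < Nu) by (unfold Nu; nra). assert (0 < Np) by (unfold Np; nra).
  apply (cos_le_of_sin_ge _ (vdet u v / Nu) _ (vdet p q / Np)).
  - apply (Rmult_eq_reg_r (Nu * Nu)); [|nra]. field_simplify; [|lra]. unfold Nu. nra.
  - apply (Rmult_eq_reg_r (Np * Np)); [|nra]. field_simplify; [|lra]. unfold Np. nra.
  - apply Rmult_le_pos; [lra | left; apply Rinv_0_lt_compat; lra].
  - apply Rmult_lt_0_compat; [lra | apply Rinv_0_lt_compat; lra].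
  - apply (Rmult_le_reg_r (Nu * Np)); [nra|]. field_simplify; [|lra|lra]. lra.
Qed.

Lemma half_le_of_cos h al : 0 <= h <= PI -> 0 <= cos h -> 0 <= al <= PI ->
  2 * cos h * cos h - 1 <= cos al -> al / 2 <= h.
Proof.
  intros Hh Hc Ha H.
  assert (h <= PI / 2).
  { destruct (Rle_dec h (PI / 2)); auto. exfalso.
    pose proof (cos_decreasing_1 (PI / 2) h). rewrite cos_PI2 in *. lra. }
  assert (cos (2 * h) = 2 * cos h * cos h - 1) by (rewrite cos_2a_cos; ring).
  assert (al <= 2 * h) by (apply le_of_cos_le; lra).
  lra.
Qed.

Lemma sin_half_sqr al : sin (al / 2) * sin (al / 2) = (1 - cos al) / 2.
Proof.
  replace (cos al) with (cos (2 * (al / 2))) by (f_equal; field).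
  rewrite cos_2a_sin. field.
Qed.

Lemma proportional_sum_zero x1 x2 x3 x4 n1 n2 n3 n4 :
  0 < n1 -> 0 < n2 -> 0 < n3 -> 0 < n4 ->
  n1 * x2 = n2 * x1 -> n2 * x3 = n3 * x2 -> n1 * x4 = n4 * x1 ->
  x1 + x2 + x3 + x4 = 0 -> x1 = 0.
Proof.
  intros H1 H2 H3 H4 E1 E2 E3 E4.
  assert (n2 * x1 * (n1 + n2 + n3 + n4) = 0).
  { transitivity (n1 * n2 * (x1 + x2 + x3 + x4) - (n2 + n3) * (n1 * x2 - n2 * x1)
      - n1 * (n2 * x3 - n3 * x2) - n2 * (n1 * x4 - n4 * x1)); [ring|].
    rewrite E1, E2, E3, E4. ring. }
  apply Rmult_integral in H as [H|H]; [|lra].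
  apply Rmult_integral in H as [H|H]; lra.
Qed.

Lemma cos_angle_sum_le A B C D al :
  0 <= A <= PI -> 0 <= B <= PI -> 0 <= C <= PI -> 0 <= D <= PI ->
  0 < al <= PI / 2 -> al <= A + C -> al <= B + D ->
  cos (A + C) = cos (B + D) -> sin (A + C) = - sin (B + D) ->
  ~ (A = PI /\ B = PI /\ C = PI /\ D = PI) ->
  cos (A + C) <= cos al.
Proof.
  intros HA HB HC HD Hal H1 H2 Ec Es Hn.
  destruct (Rle_dec (A + C) PI); [apply cos_antitone; lra|].
  destruct (Rle_dec (B + D) PI); [rewrite Ec; apply cos_antitone; lra|].
  exfalso. apply Hn.
  assert (A + C = 2 * PI).
  { destruct (Rle_dec (2 * PI) (A + C)); [lra|].
    pose proof (sin_lt_0 (A + C)). pose proof (sin_le_0 (B + D)). lra. }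
  assert (B + D = 2 * PI).
  { destruct (Rle_dec (2 * PI) (B + D)); [lra|].
    pose proof (sin_lt_0 (B + D)). pose proof (sin_le_0 (A + C)). lra. }
  lra.
Qed.

(* [M^2 - (P + Q)^2 sin^2 (al/2) = (1 + cos al) (P - Q)^2 / 2 + 2 P Q (cos al - c)]. *)
Lemma sum_mul_sin_half_le P Q M c al : 0 < al <= PI / 2 -> 0 <= P -> 0 <= Q -> 0 <= M ->
  M * M = P * P + Q * Q - 2 * (P * Q * c) -> c <= cos al ->
  (P + Q) * sin (al / 2) <= M.
Proof.
  intros Hal HP HQ HR E Hc.
  assert (0 <= cos al <= 1) by (split; [apply cos_ge_0 | apply COS_bound]; lra).
  assert (0 < sin (al / 2)) by (apply sin_gt_0; lra).
  apply Rsqr_incr_0_var; [|lra]. unfold Rsqr.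
  replace ((P + Q) * sin (al / 2) * ((P + Q) * sin (al / 2)))
    with ((P + Q) * (P + Q) * (sin (al / 2) * sin (al / 2))) by ring.
  rewrite sin_half_sqr, E.
  assert (0 <= (1 + cos al) * ((P - Q) * (P - Q))) by (apply Rmult_le_pos; [lra | apply Rle_0_sqr]).
  assert (P * Q * c <= P * Q * cos al) by (apply Rmult_le_compat_l; [apply Rmult_le_pos|]; lra).
  lra.
Qed.

Section Quadrilateral.
Variables a b c d : pt.
Hypotheses (Hab : a <> b) (Hbc : b <> c) (Hcd : c <> d) (Hda : d <> a).
Hypotheses (Ta : 0 <= vdet (vsub b a) (vsub d a)) (Tb : 0 <= vdet (vsub c b) (vsub a b))
  (Tc : 0 <= vdet (vsub d c) (vsub b c)) (Td : 0 <= vdet (vsub a d) (vsub c d)).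

Let A := vangle (vsub b a) (vsub d a).
Let B := vangle (vsub c b) (vsub a b).
Let C := vangle (vsub d c) (vsub b c).
Let D := vangle (vsub a d) (vsub c d).
Let P := vnorm (vsub b a) * vnorm (vsub d c).
Let Q := vnorm (vsub d a) * vnorm (vsub b c).

Local Ltac side_norms :=
  pose proof (vnorm_vsub_pos _ _ Hab); pose proof (vnorm_vsub_pos _ _ Hbc);
  pose proof (vnorm_vsub_pos _ _ Hcd); pose proof (vnorm_vsub_pos _ _ (not_eq_sym Hda));
  rewrite ?(vnorm_vsub_sym a b), ?(vnorm_vsub_sym b c), ?(vnorm_vsub_sym c d),
    ?(vnorm_vsub_sym a d) in *.

Lemma quad_PQ_pos : 0 < P * Q.
Proof. unfold P, Q. side_norms. repeat apply Rmult_lt_0_compat; assumption. Qed.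

Lemma quad_cos_AC : cos (A + C) * (P * Q) =
  vdot (vsub b a) (vsub d a) * vdot (vsub d c) (vsub b c)
  - vdet (vsub b a) (vsub d a) * vdet (vsub d c) (vsub b c).
Proof.
  unfold A, C, P, Q. rewrite <- cos_vangle_add; side_norms; try assumption.
  f_equal. ring.
Qed.

Lemma quad_cos_BD : cos (B + D) * (P * Q) =
  vdot (vsub c b) (vsub a b) * vdot (vsub a d) (vsub c d)
  - vdet (vsub c b) (vsub a b) * vdet (vsub a d) (vsub c d).
Proof.
  unfold B, D, P, Q. rewrite <- cos_vangle_add; side_norms; try assumption.
  f_equal. ring.
Qed.

Lemma quad_sin_AC : sin (A + C) * (P * Q) =
  vdet (vsub b a) (vsub d a) * vdot (vsub d c) (vsub b c)
  + vdot (vsub b a) (vsub d a) * vdet (vsub d c) (vsub b c).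
Proof.
  unfold A, C, P, Q. rewrite <- sin_vangle_add; side_norms; try assumption.
  f_equal. ring.
Qed.

Lemma quad_sin_BD : sin (B + D) * (P * Q) =
  vdet (vsub c b) (vsub a b) * vdot (vsub a d) (vsub c d)
  + vdot (vsub c b) (vsub a b) * vdet (vsub a d) (vsub c d).
Proof.
  unfold B, D, P, Q. rewrite <- sin_vangle_add; side_norms; try assumption.
  f_equal. ring.
Qed.

(* The four angles of a closed polygon sum to a multiple of 2 PI. *)
Lemma quad_opposite_angle_sums : cos (A + C) = cos (B + D) /\ sin (A + C) = - sin (B + D).
Proof.
  pose proof quad_PQ_pos.
  split; apply (Rmult_eq_reg_r (P * Q)); try lra.
  - rewrite quad_cos_AC, quad_cos_BD. unfold vdot, vdet, vsub; cbn [fst snd]. ring.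
  - rewrite Ropp_mult_distr_l_reverse, quad_sin_AC, quad_sin_BD.
    unfold vdot, vdet, vsub; cbn [fst snd]. ring.
Qed.

Lemma quad_not_flat : ~ (A = PI /\ B = PI /\ C = PI /\ D = PI).
Proof.
  intros [EA [EB [EC ED]]]. unfold A, B, C, D in *.
  side_norms.
  apply vdot_of_vangle_PI, antiparallel_of_vdot in EA, EB, EC, ED;
    try assumption; try (rewrite vnorm_vsub_sym; assumption).
  rewrite ?(vnorm_vsub_sym a b), ?(vnorm_vsub_sym b c), ?(vnorm_vsub_sym c d),
    ?(vnorm_vsub_sym a d) in *.
  set (n1 := vnorm (vsub b a)) in *. set (n2 := vnorm (vsub c b)) in *.
  set (n3 := vnorm (vsub d c)) in *. set (n4 := vnorm (vsub d a)) in *.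
  unfold vsub in *; cbn [fst snd] in *.
  destruct EA as [EA1 EA2], EB as [EB1 EB2], EC as [EC1 EC2], ED as [ED1 ED2].
  apply Hab. destruct a as [a1 a2], b as [b1 b2]; cbn [fst snd] in *. f_equal.
  - enough (b1 - a1 = 0) by lra.
    apply (proportional_sum_zero _ (fst c - b1) (fst d - fst c) (a1 - fst d) n1 n2 n3 n4); lra.
  - enough (b2 - a2 = 0) by lra.
    apply (proportional_sum_zero _ (snd c - b2) (snd d - snd c) (a2 - snd d) n1 n2 n3 n4); lra.
Qed.

Lemma quad_bretschneider :
  (dist2 a c * dist2 b d) * (dist2 a c * dist2 b d) = P * P + Q * Q - 2 * (P * Q * cos (A + C)).
Proof.
  replace (P * Q * cos (A + C)) with (cos (A + C) * (P * Q)) by ring.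
  rewrite quad_cos_AC. unfold P, Q. rewrite !dist2_vnorm.
  assert (Hsq : forall x y : R, x * y * (x * y) = (x * x) * (y * y)) by (intros; ring).
  rewrite !Hsq, !vnorm_mul_self. unfold vdot, vdet, vsub; cbn [fst snd]. ring.
Qed.

Hypotheses (Hac : a <> c) (Hbd : b <> d).

Lemma quad_pq_le al : 0 < al <= PI / 2 -> al <= A + C -> al <= B + D ->
  pq a b c d <= 1 / sin (al / 2).
Proof.
  intros Hal HAC HBD.
  pose proof quad_opposite_angle_sums as [Ec Es].
  assert (Hcos : cos (A + C) <= cos al)
    by (apply cos_angle_sum_le with B D; try apply vangle_bound; auto using quad_not_flat).
  pose proof quad_PQ_pos.
  assert (0 < dist2 a c) by (rewrite dist2_vnorm; now apply vnorm_vsub_pos).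
  assert (0 < dist2 b d) by (rewrite dist2_vnorm; now apply vnorm_vsub_pos).
  assert (Hle : (P + Q) * sin (al / 2) <= dist2 a c * dist2 b d).
  { apply sum_mul_sin_half_le with (cos (A + C)); try nra.
    - unfold P. apply Rmult_le_pos; apply vnorm_ge0.
    - unfold Q. apply Rmult_le_pos; apply vnorm_ge0.
    - apply quad_bretschneider. }
  assert (0 < sin (al / 2)) by (apply sin_gt_0; lra).
  assert (Hpq : pq a b c d = (P + Q) / (dist2 a c * dist2 b d)).
  { unfold pq, P, Q. rewrite !dist2_vnorm, (vnorm_vsub_sym c b). reflexivity. }
  rewrite Hpq. apply (Rmult_le_reg_r (dist2 a c * dist2 b d * sin (al / 2)));
    [repeat apply Rmult_lt_0_compat; assumption|].
  field_simplify; [lra | lra | split; lra].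
Qed.

End Quadrilateral.

(* A frame [(o, e1, e2)] is a vertex of the parallelogram [o, o + e1, o + e1 + e2, o + e2]
   with its two edges; [frame_next] moves it to the next vertex, and [frame_walk F] runs
   along the boundary, one unit of parameter per side, periodically in [s >= 0]. *)
Definition frame : Type := (pt * pt * pt)%type.

Definition frame_pt (F : frame) (X Y : R) : pt :=
  let '(o, e1, e2) := F in
  (fst o + X * fst e1 + Y * fst e2, snd o + X * snd e1 + Y * snd e2).

Definition frame_next (F : frame) : frame :=
  let '(o, e1, e2) := F in (padd o e1, e2, vopp e1).

Definition frame_iter (n : nat) (F : frame) : frame := Nat.iter n frame_next F.

Definition frame_walk (F : frame) (s : R) : pt :=
  frame_pt (frame_iter (Z.to_nat (Int_part s)) F) (s - IZR (Int_part s)) 0.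

Lemma frame_iter_S n F : frame_iter (S n) F = frame_next (frame_iter n F).
Proof. reflexivity. Qed.

Lemma frame_iter_add n k F : frame_iter (n + k) F = frame_iter n (frame_iter k F).
Proof. apply Nat.iter_add. Qed.

Lemma frame_pt_next F X Y : frame_pt (frame_next F) X Y = frame_pt F (1 - Y) X.
Proof.
  destruct F as [[o e1] e2]. unfold frame_pt, frame_next, padd, vopp; cbn [fst snd].
  f_equal; ring.
Qed.

Lemma frame_iter_4 F : frame_iter 4 F = F.
Proof.
  destruct F as [[[o1 o2] [a1 a2]] [b1 b2]].
  unfold frame_iter; simpl. unfold padd, vopp; cbn [fst snd].
  repeat f_equal; ring.
Qed.

Lemma Int_part_INR_add (n : nat) f : 0 <= f < 1 -> Int_part (INR n + f) = Z.of_nat n.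
Proof. intros. symmetry. apply Int_part_spec. rewrite <- INR_IZR_INZ. lra. Qed.

Lemma Int_part_nonneg s : 0 <= s -> (0 <= Int_part s)%Z.
Proof.
  intros Hs. pose proof (base_Int_part s).
  assert (-1 < Int_part s)%Z by (apply lt_IZR; lra). lia.
Qed.

Lemma floor_nat s : 0 <= s -> exists m : nat, INR m <= s < INR m + 1.
Proof.
  intros Hs. exists (Z.to_nat (Int_part s)).
  rewrite INR_IZR_INZ, Z2Nat.id by now apply Int_part_nonneg.
  pose proof (base_Int_part s). lra.
Qed.

Lemma frame_walk_side0 F (n : nat) s : INR n <= s <= INR n + 1 ->
  frame_walk F s = frame_pt (frame_iter n F) (s - INR n) 0.
Proof.
  intros Hs. unfold frame_walk.
  destruct (Req_dec s (INR n + 1)) as [->|].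
  - replace (INR n + 1) with (INR (S n) + 0) by (rewrite S_INR; ring).
    rewrite Int_part_INR_add by lra.
    rewrite Nat2Z.id, <- INR_IZR_INZ, frame_iter_S, frame_pt_next, S_INR.
    f_equal; ring.
  - replace s with (INR n + (s - INR n)) by ring.
    rewrite Int_part_INR_add by lra. rewrite Nat2Z.id, <- INR_IZR_INZ. f_equal; ring.
Qed.

Lemma frame_walk_add4 F s : 0 <= s -> frame_walk F (s + 4) = frame_walk F s.
Proof.
  intros Hs. unfold frame_walk.
  assert (E : Int_part (s + 4) = (Int_part s + 4)%Z).
  { symmetry. apply Int_part_spec. rewrite plus_IZR. pose proof (base_Int_part s). lra. }
  pose proof (Int_part_nonneg s Hs).
  rewrite E, plus_IZR. replace (Z.to_nat (Int_part s + 4)) with (Z.to_nat (Int_part s) + 4)%nat by lia.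
  rewrite Nat.add_comm, frame_iter_add, frame_iter_4. f_equal. ring.
Qed.

Lemma frame_walk_side1 F (n : nat) s : INR n + 1 <= s <= INR n + 2 ->
  frame_walk F s = frame_pt (frame_iter n F) 1 (s - INR n - 1).
Proof.
  intros. rewrite (frame_walk_side0 F (S n)) by (rewrite S_INR; lra).
  rewrite frame_iter_S, frame_pt_next, S_INR. f_equal; ring.
Qed.

Lemma frame_walk_side2 F (n : nat) s : INR n + 2 <= s <= INR n + 3 ->
  frame_walk F s = frame_pt (frame_iter n F) (1 - (s - INR n - 2)) 1.
Proof.
  intros. rewrite (frame_walk_side0 F (S (S n))) by (rewrite !S_INR; lra).
  rewrite !frame_iter_S, !frame_pt_next, !S_INR. f_equal; ring.
Qed.

Lemma frame_walk_side3 F (n : nat) s : INR n + 3 <= s <= INR n + 4 ->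
  frame_walk F s = frame_pt (frame_iter n F) 0 (1 - (s - INR n - 3)).
Proof.
  intros. rewrite (frame_walk_side0 F (S (S (S n)))) by (rewrite !S_INR; lra).
  rewrite !frame_iter_S, !frame_pt_next, !S_INR. f_equal; ring.
Qed.

Lemma frame_walk_side4 F (n : nat) s : INR n + 4 <= s <= INR n + 5 ->
  frame_walk F s = frame_pt (frame_iter n F) (s - INR n - 4) 0.
Proof.
  intros. rewrite (frame_walk_side0 F (4 + n)) by (rewrite plus_INR; simpl; lra).
  rewrite frame_iter_add, frame_iter_4, plus_INR. simpl INR. f_equal; ring.
Qed.

Lemma rhombus_path_frame_walk a e1 e2 t : 0 <= t < 4 ->
  rhombus_path a e1 e2 t = frame_walk (a, e1, e2) t.
Proof.
  intros Ht. unfold rhombus_path, quad_path, lerp, padd.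
  destruct (Rlt_dec t 1); [rewrite (frame_walk_side0 _ 0) by (simpl; lra)|].
  2: destruct (Rlt_dec t 2); [rewrite (frame_walk_side1 _ 0) by (simpl; lra)|].
  3: destruct (Rlt_dec t 3); [rewrite (frame_walk_side2 _ 0) by (simpl; lra)
                             | rewrite (frame_walk_side3 _ 0) by (simpl; lra)].
  all: simpl INR; unfold frame_iter, frame_pt; simpl Nat.iter; cbn [fst snd]; f_equal; ring.
Qed.

Definition rhombus_edges (al : R) (e1 e2 : pt) : Prop :=
  vnorm e1 = vnorm e2 /\ 0 < vdet e1 e2 /\
  cos al = Rabs (vdot e1 e2) / (vnorm e1 * vnorm e2).

Definition rhombus_frame (al : R) (F : frame) : Prop :=
  let '(_, e1, e2) := F in rhombus_edges al e1 e2.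

Lemma rhombus_frame_next al F : rhombus_frame al F -> rhombus_frame al (frame_next F).
Proof.
  destruct F as [[o e1] e2]. unfold rhombus_frame, rhombus_edges, frame_next.
  intros [H1 [H2 H3]]. rewrite vnorm_vopp. repeat split; [lra | ..].
  - unfold vdet, vopp in *; cbn [fst snd]. lra.
  - replace (vdot e2 (vopp e1)) with (- vdot e1 e2) by (unfold vdot, vopp; cbn [fst snd]; ring).
    rewrite Rabs_Ropp, H3, H1. reflexivity.
Qed.

Lemma rhombus_frame_iter al n F : rhombus_frame al F -> rhombus_frame al (frame_iter n F).
Proof.
  intros H. induction n as [|n IH]; [exact H|].
  rewrite frame_iter_S. now apply rhombus_frame_next.
Qed.

Definition lincomb (e1 e2 : pt) (x y : R) : pt :=
  (x * fst e1 + y * fst e2, x * snd e1 + y * snd e2).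

Lemma vsub_frame_pt o e1 e2 X Y X' Y' :
  vsub (frame_pt (o, e1, e2) X Y) (frame_pt (o, e1, e2) X' Y') = lincomb e1 e2 (X - X') (Y - Y').
Proof. unfold vsub, frame_pt, lincomb; cbn [fst snd]. f_equal; ring. Qed.

Lemma vdot_lincomb e1 e2 x1 y1 x2 y2 :
  vdot (lincomb e1 e2 x1 y1) (lincomb e1 e2 x2 y2) =
  x1 * x2 * vdot e1 e1 + y1 * y2 * vdot e2 e2 + (x1 * y2 + y1 * x2) * vdot e1 e2.
Proof. unfold vdot, lincomb; cbn [fst snd]. ring. Qed.

Lemma vdet_lincomb e1 e2 x1 y1 x2 y2 :
  vdet (lincomb e1 e2 x1 y1) (lincomb e1 e2 x2 y2) = vdet e1 e2 * (x1 * y2 - y1 * x2).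
Proof. unfold vdet, lincomb; cbn [fst snd]. ring. Qed.

Lemma vnorm_lincomb_mul_self e1 e2 x y :
  vnorm (lincomb e1 e2 x y) * vnorm (lincomb e1 e2 x y) =
  x * x * vdot e1 e1 + y * y * vdot e2 e2 + 2 * x * y * vdot e1 e2.
Proof. rewrite vnorm_mul_self. unfold vdot, lincomb; cbn [fst snd]. ring. Qed.

Lemma vnorm_lincomb_pos e1 e2 x y : 0 < vdet e1 e2 -> (x <> 0 \/ y <> 0) ->
  0 < vnorm (lincomb e1 e2 x y).
Proof.
  intros H Nxy. pose proof (vnorm_ge0 (lincomb e1 e2 x y)).
  destruct (Req_dec (vnorm (lincomb e1 e2 x y)) 0) as [E|E]; [exfalso|lra].
  pose proof (vnorm_mul_self (lincomb e1 e2 x y)) as S. rewrite E in S.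
  assert (F1 : fst (lincomb e1 e2 x y) = 0) by nra.
  assert (F2 : snd (lincomb e1 e2 x y) = 0) by nra.
  unfold lincomb in F1, F2; cbn [fst snd] in F1, F2.
  assert (x * vdet e1 e2 = 0).
  { transitivity ((x * fst e1 + y * fst e2) * snd e2 - (x * snd e1 + y * snd e2) * fst e2);
      [unfold vdet; ring | rewrite F1, F2; ring]. }
  assert (y * vdet e1 e2 = 0).
  { transitivity (fst e1 * (x * snd e1 + y * snd e2) - snd e1 * (x * fst e1 + y * fst e2));
      [unfold vdet; ring | rewrite F1, F2; ring]. }
  destruct Nxy; [apply (Rmult_integral_contrapositive x (vdet e1 e2))
                | apply (Rmult_integral_contrapositive y (vdet e1 e2))]; lra.
Qed.

Lemma vangle_opposite_lincomb e1 e2 x y : 0 < vdet e1 e2 -> x < 0 < y ->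
  vangle (lincomb e1 e2 x 0) (lincomb e1 e2 y 0) = PI.
Proof.
  intros H Hxy.
  pose proof (vnorm_lincomb_pos e1 e2 x 0 H ltac:(left; lra)) as N1.
  pose proof (vnorm_lincomb_pos e1 e2 y 0 H ltac:(left; lra)) as N2.
  pose proof (vnorm_lincomb_mul_self e1 e2 x 0) as S1.
  pose proof (vnorm_lincomb_mul_self e1 e2 y 0) as S2.
  pose proof (vnorm_pos_of_vdet_pos e1 e2 H) as [P1 _].
  assert (0 < vdot e1 e1)
    by (replace (vdot e1 e1) with (vnorm e1 * vnorm e1) by (rewrite vnorm_mul_self; unfold vdot; ring); nra).
  set (n1 := vnorm (lincomb e1 e2 x 0)) in *. set (n2 := vnorm (lincomb e1 e2 y 0)) in *.
  assert (E : n1 * n2 = - (x * y * vdot e1 e1)).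
  { assert ((n1 * n2) * (n1 * n2) = (x * y * vdot e1 e1) * (x * y * vdot e1 e1))
      by (transitivity ((n1 * n1) * (n2 * n2)); [ring | rewrite S1, S2; ring]).
    assert (0 < n1 * n2) by (apply Rmult_lt_0_compat; lra).
    assert (0 < - x * y * vdot e1 e1)
      by (apply Rmult_lt_0_compat; [apply Rmult_lt_0_compat|]; lra).
    nra. }
  unfold vangle. fold n1 n2. rewrite vdot_lincomb.
  replace (x * y * vdot e1 e1 + 0 * 0 * vdot e2 e2 + (x * 0 + 0 * y) * vdot e1 e2 ) with (- (n1 * n2))
    by (rewrite E; ring).
  replace (- (n1 * n2) / (n1 * n2)) with (-1) by (field; lra).
  change (IZR (-1)) with (- IZR 1). rewrite acos_opp, acos_1. ring.
Qed.

Lemma le_of_sub_eq x y e : y - x = e -> 0 <= e -> x <= y.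
Proof. lra. Qed.

Lemma two_corner_poly_nonneg f b t : 0 <= f <= 1 -> 0 <= b <= 1 -> 0 <= t <= 1 ->
  0 <= f * t + (1 - t) * b - f * b + t * (1 - t).
Proof.
  intros. destruct (Rle_dec 0 (1 - t - f)).
  - assert (0 <= f * t) by (apply Rmult_le_pos; lra).
    assert (0 <= b * (1 - t - f)) by (apply Rmult_le_pos; lra).
    assert (0 <= t * (1 - t)) by (apply Rmult_le_pos; lra). nra.
  - assert (b * (1 - t - f) >= 1 * (1 - t - f)) by nra.
    assert (0 <= (1 - t) * (1 + t - f)) by (apply Rmult_le_pos; lra).
    nra.
Qed.

Section RhombusEdges.
Variables (al : R) (e1 e2 : pt).
Hypotheses (HR : rhombus_edges al e1 e2) (Hal : 0 < al <= PI / 2).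

Lemma rhombus_vdet_pos : 0 < vdet e1 e2.
Proof. apply HR. Qed.

Lemma rhombus_vnorm_mul : vnorm e1 * vnorm e2 = vdot e1 e1.
Proof.
  destruct HR as [H1 _]. rewrite <- H1, vnorm_mul_self. unfold vdot. ring.
Qed.

Lemma rhombus_vdot_e2 : vdot e2 e2 = vdot e1 e1.
Proof.
  rewrite <- rhombus_vnorm_mul. destruct HR as [H1 _]. rewrite H1, vnorm_mul_self.
  unfold vdot. ring.
Qed.

Lemma rhombus_vdot_e1_pos : 0 < vdot e1 e1.
Proof.
  rewrite <- rhombus_vnorm_mul.
  destruct (vnorm_pos_of_vdet_pos e1 e2 rhombus_vdet_pos). nra.
Qed.

Lemma rhombus_abs_vdot_lt : Rabs (vdot e1 e2) < vdot e1 e1.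
Proof.
  pose proof (lagrange_identity e1 e2) as LG. pose proof rhombus_vdet_pos.
  pose proof rhombus_vdot_e1_pos. pose proof rhombus_vdot_e2.
  replace (fst e1 ^ 2 + snd e1 ^ 2) with (vdot e1 e1) in LG by (unfold vdot; ring).
  replace (fst e2 ^ 2 + snd e2 ^ 2) with (vdot e2 e2) in LG by (unfold vdot; ring).
  apply Rabs_def1; nra.
Qed.

Lemma rhombus_cos : cos al = Rabs (vdot e1 e2) / vdot e1 e1.
Proof. destruct HR as [_ [_ ->]]. now rewrite rhombus_vnorm_mul. Qed.

(* In frame coordinates, [vdot] and [vdet] are the Gram form and the determinant of the
   coefficients, so comparing angles is comparing polynomial expressions in them. *)
Lemma vangle_lincomb_le u1 u2 v1 v2 p1 p2 q1 q2 :
  (u1 <> 0 \/ u2 <> 0) -> (v1 <> 0 \/ v2 <> 0) -> (p1 <> 0 \/ p2 <> 0) -> (q1 <> 0 \/ q2 <> 0) ->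
  0 <= u1 * v2 - u2 * v1 -> 0 < p1 * q2 - p2 * q1 ->
  ((u1 * v1 + u2 * v2) * vdot e1 e1 + (u1 * v2 + u2 * v1) * vdot e1 e2) * (p1 * q2 - p2 * q1)
  <= (u1 * v2 - u2 * v1) * ((p1 * q1 + p2 * q2) * vdot e1 e1 + (p1 * q2 + p2 * q1) * vdot e1 e2) ->
  vangle (lincomb e1 e2 p1 p2) (lincomb e1 e2 q1 q2) <= vangle (lincomb e1 e2 u1 u2) (lincomb e1 e2 v1 v2).
Proof.
  intros Nu Nv Np Nq D1 D2 H. pose proof rhombus_vdet_pos.
  apply vangle_le_of_cross; try (apply vnorm_lincomb_pos; assumption).
  - rewrite vdet_lincomb. apply Rmult_le_pos; lra.
  - rewrite vdet_lincomb. apply Rmult_lt_0_compat; lra.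
  - rewrite !vdot_lincomb, !vdet_lincomb, rhombus_vdot_e2.
    eapply Rle_trans; [right | eapply Rle_trans;
      [apply (Rmult_le_compat_l (vdet e1 e2)); [lra | exact H] | right]]; ring.
Qed.

Lemma rhombus_corner_angle_ge : al <= vangle (lincomb e1 e2 0 1) (lincomb e1 e2 (-1) 0).
Proof.
  pose proof rhombus_vdet_pos as HD. pose proof rhombus_vdot_e1_pos.
  pose proof (vnorm_lincomb_pos e1 e2 0 1 HD ltac:(lra)) as N1.
  pose proof (vnorm_lincomb_pos e1 e2 (-1) 0 HD ltac:(lra)) as N2.
  apply le_of_cos_le; [lra | apply vangle_bound |].
  rewrite cos_vangle, vdot_lincomb by assumption.
  assert (E : vnorm (lincomb e1 e2 0 1) * vnorm (lincomb e1 e2 (-1) 0) = vdot e1 e1).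
  { pose proof (vnorm_lincomb_mul_self e1 e2 0 1). pose proof (vnorm_lincomb_mul_self e1 e2 (-1) 0).
    rewrite rhombus_vdot_e2 in *.
    assert (0 < vnorm (lincomb e1 e2 0 1) * vnorm (lincomb e1 e2 (-1) 0)) by nra.
    nra. }
  rewrite E, rhombus_cos, rhombus_vdot_e2.
  apply (Rmult_le_reg_r (vdot e1 e1)); [lra|]. field_simplify; [|lra|lra].
  pose proof (Rle_abs (- vdot e1 e2)). rewrite Rabs_Ropp in *. lra.
Qed.

Lemma half_vangle_lincomb_ge x1 y1 x2 y2 : (x1 <> 0 \/ y1 <> 0) -> (x2 <> 0 \/ y2 <> 0) ->
  let u := lincomb e1 e2 x1 y1 in let v := lincomb e1 e2 x2 y2 in
  0 <= vdot u v ->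
  2 * vdot u v ^ 2 - (vnorm u * vnorm u) * (vnorm v * vnorm v)
    <= cos al * ((vnorm u * vnorm u) * (vnorm v * vnorm v)) ->
  al / 2 <= vangle u v.
Proof.
  intros Nu Nv u v Hd H. pose proof rhombus_vdet_pos.
  pose proof (vnorm_lincomb_pos e1 e2 x1 y1 H0 Nu) as N1.
  pose proof (vnorm_lincomb_pos e1 e2 x2 y2 H0 Nv) as N2. fold u v in N1, N2.
  apply half_le_of_cos; [apply vangle_bound | | lra |]; rewrite cos_vangle by assumption.
  - apply Rmult_le_pos; [lra | left; apply Rinv_0_lt_compat; nra].
  - apply (Rmult_le_reg_r ((vnorm u * vnorm u) * (vnorm v * vnorm v)));
      [apply Rmult_lt_0_compat; apply Rmult_lt_0_compat; lra|].
    field_simplify; [|lra]. lra.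
Qed.

Lemma rhombus_diagonal_angle_ge0 : al / 2 <= vangle (lincomb e1 e2 1 0) (lincomb e1 e2 1 1).
Proof.
  pose proof rhombus_vdot_e1_pos. pose proof rhombus_abs_vdot_lt.
  pose proof (Rle_abs (vdot e1 e2)). pose proof (Rle_abs (- vdot e1 e2)). rewrite Rabs_Ropp in *.
  apply half_vangle_lincomb_ge; try lra; rewrite vdot_lincomb, ?vnorm_lincomb_mul_self, rhombus_vdot_e2;
    [lra|]. rewrite rhombus_cos.
  apply (Rmult_le_reg_r (vdot e1 e1)); [lra|]. field_simplify; [|lra].
  set (g := vdot e1 e2) in *. set (L := vdot e1 e1) in *.
  assert (2 * L * (L + g) * g <= 2 * L * (L + g) * Rabs g)
    by (apply Rmult_le_compat_l; [apply Rmult_le_pos|]; lra).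
  lra.
Qed.

Lemma rhombus_diagonal_angle_ge1 : al / 2 <= vangle (lincomb e1 e2 (-1) 1) (lincomb e1 e2 (-1) 0).
Proof.
  pose proof rhombus_vdot_e1_pos. pose proof rhombus_abs_vdot_lt.
  pose proof (Rle_abs (vdot e1 e2)). pose proof (Rle_abs (- vdot e1 e2)). rewrite Rabs_Ropp in *.
  apply half_vangle_lincomb_ge; try lra; rewrite vdot_lincomb, ?vnorm_lincomb_mul_self, rhombus_vdot_e2;
    [lra|]. rewrite rhombus_cos.
  apply (Rmult_le_reg_r (vdot e1 e1)); [lra|]. field_simplify; [|lra].
  set (g := vdot e1 e2) in *. set (L := vdot e1 e1) in *.
  assert (2 * L * (L - g) * (- g) <= 2 * L * (L - g) * Rabs g)
    by (apply Rmult_le_compat_l; [apply Rmult_le_pos|]; lra).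
  lra.
Qed.


Lemma frame_vangle_flat o sx sz sy : 0 <= sx -> sx < sz -> sz < sy -> sy <= 1 ->
  vangle (vsub (frame_pt (o, e1, e2) sx 0) (frame_pt (o, e1, e2) sz 0))
         (vsub (frame_pt (o, e1, e2) sy 0) (frame_pt (o, e1, e2) sz 0)) = PI.
Proof.
  intros. rewrite !vsub_frame_pt, Rminus_diag.
  apply vangle_opposite_lincomb; [apply rhombus_vdet_pos | lra].
Qed.

Lemma frame_vangle_one_corner o sx ty z : 0 <= sx < 1 -> 0 < ty <= 1 ->
  (exists sz, sx < sz <= 1 /\ z = frame_pt (o, e1, e2) sz 0) \/
  (exists tz, 0 <= tz < ty /\ z = frame_pt (o, e1, e2) 1 tz) ->
  al <= vangle (vsub (frame_pt (o, e1, e2) sx 0) z) (vsub (frame_pt (o, e1, e2) 1 ty) z).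
Proof.
  intros Hx Hy Hz. rewrite vangle_sym. pose proof rhombus_vdot_e1_pos.
  eapply Rle_trans; [apply rhombus_corner_angle_ge|].
  destruct Hz as [[sz [Hs ->]] | [tz [Ht ->]]]; rewrite !vsub_frame_pt;
    apply vangle_lincomb_le; try (left; lra); try (right; lra); try lra.
  - apply (le_of_sub_eq _ _ (ty * (sz - sx))); [ring | apply Rmult_le_pos; lra].
  - apply (le_of_sub_eq _ _ (vdot e1 e1 * ((1 - sz) * (sz - sx)))); [ring|].
    apply Rmult_le_pos; [|apply Rmult_le_pos]; lra.
  - apply (le_of_sub_eq _ _ ((ty - tz) * (1 - sx))); [ring | apply Rmult_le_pos; lra].
  - apply (le_of_sub_eq _ _ (vdot e1 e1 * ((ty - tz) * tz))); [ring|].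
    apply Rmult_le_pos; [|apply Rmult_le_pos]; lra.
Qed.

Lemma frame_vangle_two_corners o sx fy z : 0 < sx < 1 -> 0 < fy < 1 ->
  (exists sz, sx < sz <= 1 /\ z = frame_pt (o, e1, e2) sz 0) \/
  (exists tz, 0 <= tz <= 1 /\ z = frame_pt (o, e1, e2) 1 tz) \/
  (exists fz, 0 <= fz < fy /\ z = frame_pt (o, e1, e2) (1 - fz) 1) ->
  al / 2 <= vangle (vsub (frame_pt (o, e1, e2) sx 0) z) (vsub (frame_pt (o, e1, e2) (1 - fy) 1) z).
Proof.
  intros Hx Hy Hz. rewrite vangle_sym. pose proof rhombus_vdot_e1_pos.
  destruct Hz as [[sz [Hs ->]] | [[tz [Ht ->]] | [fz [Hf ->]]]]; rewrite !vsub_frame_pt.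
  - eapply Rle_trans; [apply rhombus_diagonal_angle_ge1|].
    apply vangle_lincomb_le; try (left; lra); try (right; lra); try lra.
    apply (le_of_sub_eq _ _ (vdot e1 e1 * ((sz - sx) * (2 - fy - sz)))); [ring|].
    apply Rmult_le_pos; [|apply Rmult_le_pos]; lra.
  - pose proof (two_corner_poly_nonneg fy (1 - sx) tz ltac:(lra) ltac:(lra) ltac:(lra)).
    set (K := fy * tz + (1 - tz) * (1 - sx) - fy * (1 - sx) + tz * (1 - tz)) in *.
    assert (0 <= vdot e1 e1 * K) by (apply Rmult_le_pos; lra).
    assert (0 <= fy * tz) by (apply Rmult_le_pos; lra).
    assert (0 <= (1 - tz) * (1 - sx)) by (apply Rmult_le_pos; lra).
    destruct (Rle_dec 0 (vdot e1 e2));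
      [ eapply Rle_trans; [apply rhombus_diagonal_angle_ge0|]
      | eapply Rle_trans; [apply rhombus_diagonal_angle_ge1|] ];
      apply vangle_lincomb_le; try (left; lra); try (right; lra); try lra.
    + apply (le_of_sub_eq _ _ (vdot e1 e1 * K + 2 * vdot e1 e2 * ((1 - tz) * (1 - sx))));
        [unfold K; ring | apply Rplus_le_le_0_compat; [lra | apply Rmult_le_pos; lra]].
    + apply (le_of_sub_eq _ _ (vdot e1 e1 * K + 2 * (- vdot e1 e2) * (fy * tz)));
        [unfold K; ring | apply Rplus_le_le_0_compat; [lra | apply Rmult_le_pos; lra]].
  - eapply Rle_trans; [apply rhombus_diagonal_angle_ge0|].
    apply vangle_lincomb_le; try (left; lra); try (right; lra); try lra.
    apply (le_of_sub_eq _ _ (vdot e1 e1 * ((fy - fz) * (sx + fz)))); [ring|].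
    apply Rmult_le_pos; [|apply Rmult_le_pos]; lra.
Qed.

End RhombusEdges.

Definition walk_angle (F : frame) (sx sz sy : R) : R :=
  vangle (vsub (frame_walk F sx) (frame_walk F sz)) (vsub (frame_walk F sy) (frame_walk F sz)).

Section WalkAngles.
Variables (al : R) (F : frame).
Hypotheses (HF : rhombus_frame al F) (Hal : 0 < al <= PI / 2).

Lemma walk_angle_flat m sx sz sy : INR m <= sx -> sx < sz -> sz < sy -> sy <= INR m + 1 ->
  walk_angle F sx sz sy = PI.
Proof.
  intros. unfold walk_angle. rewrite !(frame_walk_side0 F m) by lra.
  pose proof (rhombus_frame_iter al m F HF) as HR.
  destruct (frame_iter m F) as [[o e1] e2].
  apply (frame_vangle_flat al e1 e2 HR); lra.
Qed.

Lemma walk_angle_one_corner m sx sz sy :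
  INR m <= sx < INR m + 1 -> INR m + 1 < sy <= INR m + 2 -> sx < sz < sy ->
  al <= walk_angle F sx sz sy.
Proof.
  intros Hx Hy Hz. unfold walk_angle.
  rewrite (frame_walk_side0 F m sx), (frame_walk_side1 F m sy) by lra.
  pose proof (rhombus_frame_iter al m F HF) as HR.
  destruct (Rle_dec sz (INR m + 1)).
  - rewrite (frame_walk_side0 F m sz) by lra. destruct (frame_iter m F) as [[o e1] e2].
    apply (frame_vangle_one_corner al e1 e2 HR Hal); try lra.
    left. exists (sz - INR m). split; [lra | reflexivity].
  - rewrite (frame_walk_side1 F m sz) by lra. destruct (frame_iter m F) as [[o e1] e2].
    apply (frame_vangle_one_corner al e1 e2 HR Hal); try lra.
    right. exists (sz - INR m - 1). split; [lra | reflexivity].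
Qed.

Lemma walk_angle_two_corners m sx sz sy :
  INR m < sx < INR m + 1 -> INR m + 2 < sy < INR m + 3 -> sx < sz < sy ->
  al / 2 <= walk_angle F sx sz sy.
Proof.
  intros Hx Hy Hz. unfold walk_angle.
  rewrite (frame_walk_side0 F m sx), (frame_walk_side2 F m sy) by lra.
  pose proof (rhombus_frame_iter al m F HF) as HR.
  destruct (Rle_dec sz (INR m + 1)); [|destruct (Rle_dec sz (INR m + 2))].
  - rewrite (frame_walk_side0 F m sz) by lra. destruct (frame_iter m F) as [[o e1] e2].
    apply (frame_vangle_two_corners al e1 e2 HR Hal); try lra.
    left. exists (sz - INR m). split; [lra | reflexivity].
  - rewrite (frame_walk_side1 F m sz) by lra. destruct (frame_iter m F) as [[o e1] e2].
    apply (frame_vangle_two_corners al e1 e2 HR Hal); try lra.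
    right; left. exists (sz - INR m - 1). split; [lra | reflexivity].
  - rewrite (frame_walk_side2 F m sz) by lra. destruct (frame_iter m F) as [[o e1] e2].
    apply (frame_vangle_two_corners al e1 e2 HR Hal); try lra.
    right; right. exists (sz - INR m - 2). split; [lra | reflexivity].
Qed.


Lemma walk_angle_bound sx sz sy : 0 <= walk_angle F sx sz sy <= PI.
Proof. apply vangle_bound. Qed.

(* The arcs from x to y through z and from y to x + 4 through w share the four corners:
   either one arc meets at most one corner, or each arc meets two. *)
Lemma walk_angle_sum_ge sx sz sy sw : 0 <= sx -> sx < sz -> sz < sy -> sy < sw -> sw < sx + 4 ->
  al <= walk_angle F sx sz sy + walk_angle F sy sw (sx + 4).
Proof.
  intros H0 H1 H2 H3 H4.
  pose proof (walk_angle_bound sx sz sy). pose proof (walk_angle_bound sy sw (sx + 4)).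
  pose proof PI_RGT_0.
  destruct (floor_nat sx H0) as [m Hm].
  assert (Hk : forall k, INR (m + k) = INR m + INR k) by (intros; apply plus_INR).
  pose proof (Hk 2%nat) as I2. pose proof (Hk 3%nat) as I3. pose proof (Hk 4%nat) as I4.
  simpl INR in I2, I3, I4.
  destruct (Rle_dec sy (INR m + 1)).
  { rewrite (walk_angle_flat m) by lra. lra. }
  destruct (Rle_dec sy (INR m + 2)).
  { pose proof (walk_angle_one_corner m sx sz sy). lra. }
  destruct (Rle_dec (INR m + 4) sy).
  { rewrite (walk_angle_flat (m + 4) sy) by lra. lra. }
  destruct (Rle_dec (INR m + 3) sy).
  { destruct (Req_dec sx (INR m)).
    - rewrite (walk_angle_flat (m + 3) sy) by lra. lra.
    - pose proof (walk_angle_one_corner (m + 3) sy sw (sx + 4)). lra. }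
  destruct (Req_dec sx (INR m)).
  - pose proof (walk_angle_one_corner (m + 2) sy sw (sx + 4)). lra.
  - pose proof (walk_angle_two_corners m sx sz sy).
    pose proof (walk_angle_two_corners (m + 2) sy sw (sx + 4)). lra.
Qed.

End WalkAngles.

Local Ltac rewrite_walk_side F m s :=
  first [ rewrite (frame_walk_side0 F m s) by lra | rewrite (frame_walk_side1 F m s) by lra
        | rewrite (frame_walk_side2 F m s) by lra | rewrite (frame_walk_side3 F m s) by lra
        | rewrite (frame_walk_side4 F m s) by lra ].

Local Ltac case_side s M :=
  destruct (Rle_dec s (M + 1)); [|destruct (Rle_dec s (M + 2)); [|destruct (Rle_dec s (M + 3));
    [|destruct (Rle_dec s (M + 4))]]].

Lemma walk_vdet_nonneg al F s1 s2 s3 : rhombus_frame al F ->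
  0 <= s1 -> s1 < s2 -> s2 < s3 -> s3 < s1 + 4 ->
  0 <= vdet (vsub (frame_walk F s2) (frame_walk F s1)) (vsub (frame_walk F s3) (frame_walk F s1)).
Proof.
  intros HF H0 H1 H2 H3.
  destruct (floor_nat s1 H0) as [m Hm].
  pose proof (rhombus_frame_iter al m F HF) as HR.
  rewrite (frame_walk_side0 F m s1) by lra.
  case_side s2 (INR m); rewrite_walk_side F m s2; case_side s3 (INR m); rewrite_walk_side F m s3;
    destruct (frame_iter m F) as [[o e1] e2]; destruct HR as [_ [HD _]];
    rewrite !vsub_frame_pt, vdet_lincomb; apply Rmult_le_pos; nra.
Qed.

Lemma rhombus_p_values_le a e1 e2 al : rhombus_edges al e1 e2 -> 0 < al <= PI / 2 ->
  is_upper_bound (p_values (rhombus_path a e1 e2)) (1 / sin (al / 2)).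
Proof.
  intros HR Hal x [pa [pb [pc [pd [[Hab [Hac [Had [Hbc [Hbd [Hcd
     [t1 [t2 [t3 [t4 [T0 [T1 [T2 [T3 [T4 [Ea [Eb [Ec Ed]]]]]]]]]]]]]]]]]] ->]]]]].
  rewrite rhombus_path_frame_walk in Ea, Eb, Ec, Ed by lra.
  set (F := (a, e1, e2)) in *.
  assert (HF : rhombus_frame al F) by exact HR.
  assert (Ea' : frame_walk F (t1 + 4) = pa) by (rewrite frame_walk_add4 by lra; exact Ea).
  assert (Eb' : frame_walk F (t2 + 4) = pb) by (rewrite frame_walk_add4 by lra; exact Eb).
  assert (Ec' : frame_walk F (t3 + 4) = pc) by (rewrite frame_walk_add4 by lra; exact Ec).
  apply quad_pq_le; auto.
  - rewrite <- Ea, <- Eb, <- Ed. apply (walk_vdet_nonneg al F); [exact HF | lra..].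
  - rewrite <- Ea', <- Eb, <- Ec. apply (walk_vdet_nonneg al F); [exact HF | lra..].
  - rewrite <- Eb', <- Ec, <- Ed. apply (walk_vdet_nonneg al F); [exact HF | lra..].
  - rewrite <- Ea', <- Ec', <- Ed. apply (walk_vdet_nonneg al F); [exact HF | lra..].
  - pose proof (walk_angle_sum_ge al F HF Hal t2 t3 t4 (t1 + 4)) as G.
    unfold walk_angle in G. rewrite Ea', Eb', Eb, Ec, Ed, (vangle_sym (vsub pd pa)) in G.
    rewrite (vangle_sym (vsub pd pc)). lra.
  - pose proof (walk_angle_sum_ge al F HF Hal t1 t2 t3 t4) as G.
    unfold walk_angle in G. rewrite Ea', Ea, Eb, Ec, Ed in G.
    rewrite (vangle_sym (vsub pa pb)), (vangle_sym (vsub pc pd)) in G. lra.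
Qed.

Lemma dist2_frame_pt o e1 e2 X Y X' Y' :
  dist2 (frame_pt (o, e1, e2) X Y) (frame_pt (o, e1, e2) X' Y') = vnorm (lincomb e1 e2 (X' - X) (Y' - Y)).
Proof. now rewrite dist2_vnorm, vsub_frame_pt. Qed.

Section AcuteCorner.
Variables (al : R) (o e1 e2 : pt).
Hypotheses (HR : rhombus_edges al e1 e2) (Hal : 0 < al <= PI / 2) (Hacute : 0 <= vdot e1 e2).

Lemma rhombus_vnorm_lincomb_sqr x y : vnorm (lincomb e1 e2 x y) * vnorm (lincomb e1 e2 x y) =
  (x * x + y * y) * vdot e1 e1 + 2 * x * y * vdot e1 e2.
Proof. rewrite vnorm_lincomb_mul_self, (rhombus_vdot_e2 al e1 e2 HR). ring. Qed.

Lemma acute_short_diagonal : vnorm (lincomb e1 e2 1 (-1)) = 2 * vnorm e1 * sin (al / 2).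
Proof.
  assert (0 < sin (al / 2)) by (apply sin_gt_0; lra).
  pose proof (vnorm_ge0 e1). pose proof (rhombus_vdot_e1_pos al e1 e2 HR).
  apply Rsqr_inj; [apply vnorm_ge0 | apply Rmult_le_pos; lra |]. unfold Rsqr.
  rewrite rhombus_vnorm_lincomb_sqr.
  replace (2 * vnorm e1 * sin (al / 2) * (2 * vnorm e1 * sin (al / 2)))
    with (4 * (vnorm e1 * vnorm e1) * (sin (al / 2) * sin (al / 2))) by ring.
  rewrite sin_half_sqr, (rhombus_cos al e1 e2 HR), Rabs_right by lra.
  replace (vnorm e1 * vnorm e1) with (vdot e1 e1) by (rewrite vnorm_mul_self; unfold vdot; ring).
  field. lra.
Qed.

Lemma rhombus_vnorm_lincomb_eq x y t : 0 <= t ->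
  t * t = (x * x + y * y) * vdot e1 e1 + 2 * x * y * vdot e1 e2 -> vnorm (lincomb e1 e2 x y) = t.
Proof.
  intros Ht E. apply Rsqr_inj; [apply vnorm_ge0 | exact Ht |]. unfold Rsqr.
  now rewrite rhombus_vnorm_lincomb_sqr.
Qed.

Lemma rhombus_vnorm_lincomb_ge x y t : 0 <= t ->
  t * t <= (x * x + y * y) * vdot e1 e1 + 2 * x * y * vdot e1 e2 -> t <= vnorm (lincomb e1 e2 x y).
Proof.
  intros Ht E. apply Rsqr_incr_0_var; [unfold Rsqr | apply vnorm_ge0].
  now rewrite rhombus_vnorm_lincomb_sqr.
Qed.

Variable r : R.
Hypothesis Hr : 0 < r < 1.

Local Notation fp := (frame_pt (o, e1, e2)).

(* The quadruple shrinks to the corner [fp 0 0] as [r] tends to 0, and its value tends to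
   [|e1| / (|e1 - e2| / 2) = 1 / sin (al / 2)]. *)
Lemma corner_pq_ge : (1 - r) / sin (al / 2) <= pq (fp 0 r) (fp 0 0) (fp r 0) (fp 1 1).
Proof.
  pose proof (rhombus_vdot_e1_pos al e1 e2 HR) as HL.
  assert (0 < sin (al / 2)) by (apply sin_gt_0; lra).
  assert (Hn : vnorm e1 * vnorm e1 = vdot e1 e1) by (rewrite vnorm_mul_self; unfold vdot; ring).
  assert (0 < vnorm e1) by (pose proof (vnorm_ge0 e1); nra).
  set (w := vnorm (lincomb e1 e2 1 (-1))). set (s := vnorm (lincomb e1 e2 1 1)).
  pose proof (rhombus_vnorm_lincomb_sqr 1 1) as Hs2. pose proof (rhombus_vnorm_lincomb_sqr 1 (-1)) as Hw2.
  fold s in Hs2. fold w in Hw2.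
  assert (Hs : 0 < s) by (apply vnorm_lincomb_pos; [apply HR | lra]).
  assert (Hw : w = 2 * vnorm e1 * sin (al / 2)) by apply acute_short_diagonal.
  unfold pq. rewrite !dist2_frame_pt.
  assert (0 <= w) by apply vnorm_ge0.
  rewrite (rhombus_vnorm_lincomb_eq (0 - 0) (0 - r) (r * vnorm e1)),
    (rhombus_vnorm_lincomb_eq (r - 0) (0 - 0) (r * vnorm e1))
    by (nra || (transitivity (r * r * (vnorm e1 * vnorm e1)); [ring | rewrite Hn; ring])).
  rewrite (rhombus_vnorm_lincomb_eq (r - 0) (0 - r) (r * w))
    by (nra || (transitivity (r * r * (w * w)); [ring | rewrite Hw2; ring])).
  rewrite (rhombus_vnorm_lincomb_eq (1 - 0) (1 - 0) s) by (lra || (rewrite Hs2; ring)).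
  pose proof (rhombus_vnorm_lincomb_ge (1 - r) (1 - 0) ((1 - r) * s)) as Hcd.
  pose proof (rhombus_vnorm_lincomb_ge (1 - 0) (1 - r) ((1 - r) * s)) as Had.
  set (X := vnorm (lincomb e1 e2 (1 - r) (1 - 0))) in *.
  set (Y := vnorm (lincomb e1 e2 (1 - 0) (1 - r))) in *.
  assert (0 <= r * (2 - r) * vdot e1 e1 + 2 * r * (1 - r) * vdot e1 e2)
    by (apply Rplus_le_le_0_compat; repeat apply Rmult_le_pos; lra).
  assert (Hsr : (1 - r) * s * ((1 - r) * s) = (1 - r) * (1 - r) * (2 * vdot e1 e1 + 2 * vdot e1 e2))
    by (transitivity ((1 - r) * (1 - r) * (s * s)); [ring | rewrite Hs2; ring]).
  assert ((1 - r) * s <= X) by (apply Hcd; [apply Rmult_le_pos | rewrite Hsr]; lra).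
  assert ((1 - r) * s <= Y) by (apply Had; [apply Rmult_le_pos | rewrite Hsr]; lra).
  assert (0 <= r * vnorm e1) by (apply Rmult_le_pos; lra).
  assert (r * vnorm e1 * ((1 - r) * s) <= r * vnorm e1 * X) by (apply Rmult_le_compat_l; lra).
  assert (r * vnorm e1 * ((1 - r) * s) <= r * vnorm e1 * Y) by (apply Rmult_le_compat_l; lra).
  rewrite Hw. apply (Rmult_le_reg_r (r * (2 * vnorm e1 * sin (al / 2)) * s)).
  { repeat apply Rmult_lt_0_compat; lra. }
  field_simplify; [lra | repeat split; lra | lra].
Qed.

End AcuteCorner.

Lemma frame_pt_neq o e1 e2 X Y X' Y' : 0 < vdet e1 e2 -> (X <> X' \/ Y <> Y') ->
  frame_pt (o, e1, e2) X Y <> frame_pt (o, e1, e2) X' Y'.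
Proof.
  intros H N. apply neq_of_vnorm_vsub_pos. rewrite vsub_frame_pt.
  apply vnorm_lincomb_pos; [exact H | destruct N; [left | right]; lra].
Qed.

Lemma pq_rot a b c d : pq a b c d = pq b c d a.
Proof.
  unfold pq. rewrite (dist2_sym d a), (dist2_sym b a), (dist2_sym c a). f_equal; ring.
Qed.

Local Ltac frame_pts_distinct HD :=
  repeat split; try (apply frame_pt_neq; [exact HD | first [left; lra | right; lra]]).

Lemma rhombus_corner_value a e1 e2 al r : rhombus_edges al e1 e2 -> 0 < al <= PI / 2 -> 0 < r < 1 ->
  exists x, p_values (rhombus_path a e1 e2) x /\ (1 - r) / sin (al / 2) <= x.
Proof.
  intros HR Hal Hr.
  assert (Hwalk : forall t, 0 <= t < 4 -> rhombus_path a e1 e2 t = frame_walk (a, e1, e2) t)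
    by (intros; now apply rhombus_path_frame_walk).
  destruct (Rle_dec 0 (vdot e1 e2)) as [Hg|Hg].
  - set (fp := frame_pt (a, e1, e2)).
    exists (pq (fp 0 r) (fp 0 0) (fp r 0) (fp 1 1)). split; [|now apply corner_pq_ge].
    exists (fp 0 0), (fp r 0), (fp 1 1), (fp 0 r). split; [|apply pq_rot].
    pose proof (rhombus_vdet_pos al e1 e2 HR) as HD. frame_pts_distinct HD.
    exists 0, r, 2, (4 - r). repeat split; try lra; rewrite Hwalk by lra.
    + rewrite (frame_walk_side0 _ 0) by (simpl; lra).
      unfold fp, frame_iter; simpl Nat.iter; simpl INR. f_equal; ring.
    + rewrite (frame_walk_side0 _ 0) by (simpl; lra).
      unfold fp, frame_iter; simpl Nat.iter; simpl INR. f_equal; ring.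
    + rewrite (frame_walk_side2 _ 0) by (simpl; lra).
      unfold fp, frame_iter; simpl Nat.iter; simpl INR. f_equal; ring.
    + rewrite (frame_walk_side3 _ 0) by (simpl; lra).
      unfold fp, frame_iter; simpl Nat.iter; simpl INR. f_equal; ring.
  - pose proof (rhombus_frame_next al (a, e1, e2) HR) as HR1.
    set (F1 := frame_next (a, e1, e2)) in HR1. set (fp := frame_pt F1).
    exists (pq (fp 0 r) (fp 0 0) (fp r 0) (fp 1 1)). split.
    + exists (fp 0 r), (fp 0 0), (fp r 0), (fp 1 1). split; [|reflexivity].
      pose proof (rhombus_vdet_pos al e2 (vopp e1) HR1) as HD. unfold fp, F1, frame_next.
      frame_pts_distinct HD.
      exists (1 - r), 1, (1 + r), 3. repeat split; try lra; rewrite Hwalk by lra.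
      * rewrite (frame_walk_side0 _ 0) by (simpl; lra).
        unfold frame_iter, frame_next, frame_pt, padd, vopp; simpl; f_equal; ring.
      * rewrite (frame_walk_side0 _ 1) by (simpl; lra).
        unfold frame_iter, frame_next, frame_pt, padd, vopp; simpl; f_equal; ring.
      * rewrite (frame_walk_side0 _ 1) by (simpl; lra).
        unfold frame_iter, frame_next, frame_pt, padd, vopp; simpl; f_equal; ring.
      * rewrite (frame_walk_side2 _ 1) by (simpl; lra).
        unfold frame_iter, frame_next, frame_pt, padd, vopp; simpl; f_equal; ring.
    + apply (corner_pq_ge al (padd a e1) e2 (vopp e1)); try assumption.
      unfold vdot, vopp in *; cbn [fst snd] in *. lra.
Qed.

Lemma le_of_forall_scaled_le K M : 0 < K -> (forall r, 0 < r < 1 -> (1 - r) * K <= M) -> K <= M.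
Proof.
  intros HK H. destruct (Rle_dec K M) as [|NM]; [assumption|]. exfalso.
  set (r := Rmin (1 / 2) ((K - M) / (2 * K))).
  assert (0 < (K - M) / (2 * K)) by (apply Rdiv_lt_0_compat; lra).
  assert (0 < r) by (apply Rmin_glb_lt; lra).
  assert (r <= 1 / 2) by apply Rmin_l.
  assert (r * K <= (K - M) / 2).
  { replace ((K - M) / 2) with ((K - M) / (2 * K) * K) by (field; lra).
    apply Rmult_le_compat_r; [lra | apply Rmin_r]. }
  specialize (H r ltac:(lra)). lra.
Qed.

Lemma rhombus_upper_bound_ge a e1 e2 al : rhombus_edges al e1 e2 -> 0 < al <= PI / 2 ->
  forall M, is_upper_bound (p_values (rhombus_path a e1 e2)) M -> 1 / sin (al / 2) <= M.
Proof.
  intros HR Hal M HM.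
  assert (0 < sin (al / 2)) by (apply sin_gt_0; lra).
  apply le_of_forall_scaled_le; [apply Rdiv_lt_0_compat; lra|].
  intros r Hr. destruct (rhombus_corner_value a e1 e2 al r HR Hal Hr) as [x [Hx Hle]].
  specialize (HM x Hx). unfold Rdiv in *. lra.
Qed.

Theorem mainTheorem5 (a e1 e2 : pt) (alpha : R) :
  vnorm e1 = vnorm e2 ->
  0 < vdet e1 e2 ->
  0 < alpha <= PI / 2 ->
  cos alpha = Rabs (vdot e1 e2) / (vnorm e1 * vnorm e2) ->
  is_lub (p_values (rhombus_path a e1 e2)) (1 / sin (alpha / 2)).
Proof.
  intros Hn Hdet Hal Hcos.
  assert (HR : rhombus_edges alpha e1 e2) by (repeat split; assumption).
  split.
  - now apply rhombus_p_values_le.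
  - now apply rhombus_upper_bound_ge.
Qed.
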